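(* Let $S$ be a semigroup of skew type with generating set $X=\{x_1,\ldots,x_n\}$, and assume $S$ satisfies the cyclic condition (C). Then $S$ satisfies the full cyclic condition (FC): for any $x,y\in X$ there exist sequences $x=z_1,z_2,\ldots,z_k$ and $y=y_1,y_2,\ldots,y_p$ of elements of $X$ such that, in $S$, $$y_j z_i = z_{i+1}\, y_{j+1}\quad\text{for all } 1\le i\le k,\ 1\le j\le p,$$ where indices of the $z$'s are read modulo $k$ (so $z_{k+1}=z_1$) and indices of the $y$'s modulo $p$ (so $y_{p+1}=y_1$).
   Context: A semigroup of skew type is a monoid $S$ with a monoid presentation $S=\langle x_1,\ldots,x_n \mid x_ix_j=x_kx_l\rangle$ consisting of $\binom{n}{2}$ relations, each of the form $x_ix_j=x_kx_l$ with $i\neq j$, $k\neq l$, such that every word $x_px_q$ with $p\neq q$ appears (as one side) in exactly one of the relations. We write $X=\{x_1,\ldots,x_n\}$ and use the same symbols for the generators in $S$. $S$ satisfies the cyclic condition (C) if for every pair $x,y\in X$ there exist elements $x=z_1,z_2,\ldots,z_k$ and $y'$ in $X$ such that in $S$: $yz_1=z_2y'$, $yz_2=z_3y'$, $\ldots$, $yz_{k-1}=z_ky'$, $yz_k=xy'$. *)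

From mathcomp Require Import all_boot.
Set Implicit Arguments. Unset Strict Implicit. Unset Printing Implicit Defensive.

(* A relation x_i x_j = x_k x_l of a presentation on generators 'I_n is
   stored as the pair ((i, j), (k, l)). *)
Definition rel2 (n : nat) := (('I_n * 'I_n) * ('I_n * 'I_n))%type.

Definition skew_type (n : nat) (rels : seq (rel2 n)) : Prop :=
  [/\ size rels = 'C(n, 2),
      (forall r, r \in rels -> r.1.1 != r.1.2 /\ r.2.1 != r.2.2) &
      (forall p q : 'I_n, p != q ->
         count (fun r : rel2 n => (r.1 == (p, q)) || (r.2 == (p, q))) rels = 1)].

(* The monoid congruence on the free monoid seq 'I_n generated by rels;
   equality in S = <X | rels> of the elements represented by words u, v. *)
Inductive eqS (n : nat) (rels : seq (rel2 n)) : seq 'I_n -> seq 'I_n -> Prop :=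
| eqS_rel : forall (r : rel2 n) (u v : seq 'I_n), r \in rels ->
    eqS rels (u ++ [:: r.1.1; r.1.2] ++ v) (u ++ [:: r.2.1; r.2.2] ++ v)
| eqS_refl : forall u, eqS rels u u
| eqS_sym : forall u v, eqS rels u v -> eqS rels v u
| eqS_trans : forall u v w, eqS rels u v -> eqS rels v w -> eqS rels u w.

(* Cyclic condition (C); the sequence z_1..z_k is z 0 .. z (k-1),
   with z_{k+1} read as z_1 = x (index modulo k). *)
Definition cyclic_condition (n : nat) (rels : seq (rel2 n)) : Prop :=
  forall x y : 'I_n, exists (k : nat) (z : nat -> 'I_n) (y' : 'I_n),
    [/\ 0 < k, z 0 = x &
        forall i, i < k -> eqS rels [:: y; z i] [:: z (i.+1 %% k); y']].

Definition full_cyclic_condition (n : nat) (rels : seq (rel2 n)) : Prop :=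
  forall x y : 'I_n, exists (k p : nat) (z w : nat -> 'I_n),
    [/\ 0 < k, 0 < p, z 0 = x, w 0 = y &
        forall i j, i < k -> j < p ->
          eqS rels [:: w j; z i] [:: z (i.+1 %% k); w (j.+1 %% p)]].

From mathcomp Require Import all_boot.

Set Implicit Arguments. Unset Strict Implicit. Unset Printing Implicit Defensive.

(* In a monoid of skew type a two-letter word equals at most one other word,
   and a square a a equals no other word; so a product c z that is rewritten
   at all is rewritten to a unique rw_left c z * rw_right c z.  For c <> x,
   (C) applied to (x, c) says that iterating rw_left c from x closes up after
   k steps while the right letter stays rw_right c x.  If y z = a y', then (C)
   applied to (y', a) closes into y' z = a y''; hence the cycle of y over x
   shifts to a cycle of y' = rw_right y x with the same left letters.
   Iterating, the right letters of an FC square are the iterates of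
   b |-> rw_right b x, which is injective and therefore periodic. *)

Lemma iter_modn (T : Type) (f : T -> T) (x : T) k i :
  iter k f x = x -> iter (i %% k) f x = iter i f x.
Proof.
move=> fix_x; have periodic q : iter (q * k) f x = x.
  by elim: q => [|q IHq] //; rewrite mulSn iterD IHq.
by rewrite {2}(divn_eq i k) addnC iterD periodic.
Qed.

Lemma count1_eq (T : eqType) (P : pred T) (s : seq T) a b :
  count P s = 1 -> a \in s -> b \in s -> P a -> P b -> a = b.
Proof.
rewrite -size_filter; case E: (filter P s) => [|t [|//]] // _ a_in b_in Pa Pb.
have : a \in filter P s by rewrite mem_filter Pa a_in.
have : b \in filter P s by rewrite mem_filter Pb b_in.
by rewrite E !inE => /eqP-> /eqP->.
Qed.

Section Rewriting.
Variables (n : nat) (rels : seq (rel2 n)).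

Definition word (p : 'I_n * 'I_n) : seq 'I_n := [:: p.1; p.2].

Definition rewrites (p q : 'I_n * 'I_n) : bool :=
  (p != q) && (((p, q) \in rels) || ((q, p) \in rels)).

Lemma rewrites_sym p q : rewrites p q = rewrites q p.
Proof. by rewrite /rewrites eq_sym orbC. Qed.

Lemma rel_eqS p q : (p, q) \in rels -> eqS rels (word p) (word q).
Proof. exact: (@eqS_rel _ _ (p, q) [::] [::]). Qed.

Lemma rewrites_eqS p q : rewrites p q -> eqS rels (word p) (word q).
Proof. by case/andP=> _ /orP[/rel_eqS | /rel_eqS /eqS_sym]. Qed.

Lemma eqS_size u v : eqS rels u v -> size u = size v.
Proof. by elim=> [r u0 v0 _|//|u0 v0 _ ->|u0 v0 w0 _ -> _ ->] //; rewrite !size_cat. Qed.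

Hypothesis skew : skew_type rels.

Lemma rewrites_letters_neq p q : rewrites p q -> p.1 != p.2.
Proof. by case: skew => _ rel_neq _ /andP[_ /orP[] /rel_neq []]. Qed.

Lemma rewrites_fun p q q' : rewrites p q -> rewrites p q' -> q = q'.
Proof.
move=> pq pq'; have p12 := rewrites_letters_neq pq.
case: skew => _ _ /(_ p.1 p.2 p12); rewrite -surjective_pairing.
set P := fun r : rel2 n => (r.1 == p) || (r.2 == p) => countP.
have same_rel := count1_eq countP.
case/andP: pq => _ /orP[] /same_rel same; case/andP: pq' => _ /orP[] /same;
  by rewrite /P /= !eqxx ?orbT => /(_ isT isT) [] *; subst.
Qed.

Lemma word_inj : injective word.
Proof. by case=> a b [c d] [-> ->]. Qed.

Lemma eqS_word2 u v : eqS rels u v -> size u = 2 ->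
  exists p q, [/\ u = word p, v = word q & (p == q) || rewrites p q].
Proof.
elim=> [[p q] u0 v0 pq_in|u0|u0 v0 uv IHuv|u0 v0 w0 uv IHuv vw IHvw] size_u.
- have [-> ->] : u0 = [::] /\ v0 = [::].
    by case: u0 v0 size_u => [|? ?] [|? ?] //=; rewrite size_cat /= ?addnS.
  by exists p, q; rewrite /rewrites pq_in /= andbT orbN.
- by case: u0 size_u => [|a [|b []]] // _; exists (a, b), (a, b); rewrite eqxx.
- have [p [q [-> -> pq]]] := IHuv (etrans (eqS_size uv) size_u).
  by exists q, p; rewrite eq_sym rewrites_sym.
- have [p [q [-> v_q pq]]] := IHuv size_u.
  have [q' [r [v_q' -> qr]]] := IHvw (etrans (esym (eqS_size uv)) size_u).
  rewrite (word_inj (etrans (esym v_q') v_q)) in qr.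
  exists p, r; split=> //.
  case/orP: pq => [/eqP -> // | pq]; case/orP: qr => [/eqP <- | qr].
    by rewrite pq orbT.
  by rewrite rewrites_sym in pq; rewrite (rewrites_fun pq qr) eqxx.
Qed.

Lemma eqS2P (a b c d : 'I_n) :
  eqS rels [:: a; b] [:: c; d] <-> (a, b) = (c, d) \/ rewrites (a, b) (c, d).
Proof.
split=> [/eqS_word2 [//|[? ?] [[? ?] [[-> ->] [-> ->] /orP[/eqP|]]]] | [[-> ->]|]].
- by left.
- by right.
- exact: eqS_refl.
- exact: rewrites_eqS.
Qed.

Lemma eqS_diag (a c d : 'I_n) : eqS rels [:: a; a] [:: c; d] -> c = a /\ d = a.
Proof.
by case/eqS2P=> [[-> ->] // | /rewrites_letters_neq]; rewrite eqxx.
Qed.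

Definition partner (p : 'I_n * 'I_n) : 'I_n * 'I_n :=
  odflt p [pick q | rewrites p q].

Definition rw_left (c z : 'I_n) : 'I_n := (partner (c, z)).1.
Definition rw_right (b x : 'I_n) : 'I_n := (partner (b, x)).2.

Lemma partnerE p q : rewrites p q -> partner p = q.
Proof.
rewrite /partner => pq; case: pickP => [q' /(rewrites_fun pq) // | /(_ q)].
by rewrite pq.
Qed.

Lemma rw_right_diag (x : 'I_n) : rw_right x x = x.
Proof.
rewrite /rw_right /partner; case: pickP => // q /rewrites_letters_neq.
by rewrite eqxx.
Qed.

Hypothesis cyclic : cyclic_condition rels.

Lemma rw_left_cycle (x c : 'I_n) : c != x ->
  exists2 k, 0 < k & iter k (rw_left c) x = x /\
    forall i, rewrites (c, iter i (rw_left c) x)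
                       (iter i.+1 (rw_left c) x, rw_right c x).
Proof.
move=> cx; have [k [u [c' [k_gt0 u0 uE]]]] := cyclic x c.
have u_neq_c i : i < k -> u i != c.
  elim: i => [|i IHi] lt_ik; first by rewrite u0 eq_sym.
  apply/eqP=> ui_c; have := uE _ lt_ik; rewrite ui_c => /eqS_diag[_ c'_c].
  have := uE i (ltnW lt_ik); rewrite modn_small // ui_c c'_c => /eqS_sym.
  by case/eqS_diag=> _ /eqP; rewrite (negPf (IHi (ltnW lt_ik))).
have chain i : i < k -> rewrites (c, u i) (u (i.+1 %% k), c').
  move=> lt_ik; case/eqS2P: (uE i lt_ik) => // [[c_u _]].
  by have := u_neq_c _ (ltn_pmod i.+1 k_gt0); rewrite -c_u eqxx.
have u_iter i : i < k -> u i = iter i (rw_left c) x.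
  elim: i => [//|i IHi] lt_ik.
  have lt_ik' := ltnW lt_ik.
  rewrite iterS -(IHi lt_ik') /rw_left (partnerE (chain i lt_ik')).
  by rewrite modn_small.
have c'E : c' = rw_right c x by rewrite /rw_right -u0 (partnerE (chain 0 k_gt0)).
have period : iter k (rw_left c) x = x.
  have lt_k : k.-1 < k by rewrite prednK.
  rewrite -[in LHS](prednK k_gt0) iterS -(u_iter _ lt_k) /rw_left.
  by rewrite (partnerE (chain _ lt_k)) prednK // modnn.
exists k => //; split=> // i.
have lt_ik := ltn_pmod i k_gt0.
have := chain _ lt_ik; rewrite -c'E (u_iter _ lt_ik) (iter_modn _ period) => step.
by rewrite iterS /rw_left (partnerE step).
Qed.

Lemma rewrites_partner (b x : 'I_n) : b != x ->
  rewrites (b, x) (rw_left b x, rw_right b x).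
Proof. by case/rw_left_cycle=> k _ [_ /(_ 0)]. Qed.

Lemma rewrites_shift (y z a y' : 'I_n) :
  rewrites (y, z) (a, y') -> exists y'', rewrites (y', z) (a, y'').
Proof.
rewrite rewrites_sym => ay'_yz; have ay' := rewrites_letters_neq ay'_yz.
have [k k_gt0 [period chain]] := rw_left_cycle ay'.
have := chain k.-1; rewrite prednK // period /rw_right (partnerE ay'_yz) /=.
by rewrite rewrites_sym; exists (iter k.-1 (rw_left a) y').
Qed.

Lemma rw_right_inj (x : 'I_n) : injective (rw_right ^~ x).
Proof.
have inj_off_x (a b : 'I_n) : a != x -> rw_right a x = rw_right b x -> a = b.
  move=> ax; have ra := rewrites_partner ax.
  have [d ra'] := rewrites_shift ra.
  case: (eqVneq b x) => [-> | bx]; rewrite ?rw_right_diag => ab.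
    by move: ra'; rewrite ab => /rewrites_letters_neq; rewrite eqxx.
  have rb := rewrites_partner bx; have [e rb'] := rewrites_shift rb.
  rewrite ab in ra ra'; case: (rewrites_fun ra' rb') => left_ab _.
  rewrite -left_ab in rb.
  rewrite rewrites_sym in ra; rewrite rewrites_sym in rb.
  by case: (rewrites_fun ra rb).
move=> a b; case: (eqVneq a x) => [-> | ax]; last exact: inj_off_x.
by case: (eqVneq b x) => [-> // | bx] /esym /(inj_off_x _ _ bx).
Qed.

Lemma rw_orbit_rewrites (x y : 'I_n) : y != x -> forall j i,
  rewrites (iter j (rw_right ^~ x) y, iter i (rw_left y) x)
           (iter i.+1 (rw_left y) x, iter j.+1 (rw_right ^~ x) y).
Proof.
move=> yx; elim=> [|j IHj] i; first by have [k _ [_]] := rw_left_cycle yx.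
set b := iter j.+1 _ y; have shifted i' := rewrites_shift (IHj i').
have bx : b != x by have [d /rewrites_letters_neq] := shifted 0.
have same_orbit i' : iter i' (rw_left b) x = iter i' (rw_left y) x.
  elim: i' => [// | i' IHi']; rewrite iterS IHi'.
  by have [d step] := shifted i'; rewrite /rw_left (partnerE step).
by have [k _ [_ chain]] := rw_left_cycle bx; rewrite -!same_orbit.
Qed.

End Rewriting.

Theorem proposition2p1 (n : nat) (rels : seq (rel2 n)) :
  skew_type rels -> cyclic_condition rels -> full_cyclic_condition rels.
Proof.
move=> skew cyclic x y; case: (eqVneq y x) => [-> | yx].
  by exists 1, 1, (fun=> x), (fun=> x); split=> // i j _ _; apply: eqS_refl.
have [k k_gt0 [period _]] := rw_left_cycle skew cyclic yx.
have tau_inj := @rw_right_inj _ _ skew cyclic x.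
exists k, (order (rw_right rels ^~ x) y), (fun i => iter i (rw_left rels y) x),
  (fun j => iter j (rw_right rels ^~ x) y); split=> // i j _ _.
rewrite (iter_modn _ period) (iter_modn _ (iter_order tau_inj y)).
by apply/(eqS2P skew); right; apply: rw_orbit_rewrites.
Qed.
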